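(* Let $P$ be a finite $(3+1)$-free poset and let $I^P_{\mathrm{plac}}$ be the two-sided ideal of $\mathcal{U}_P$ defined below. Then for all integers $k,\ell$ and all subsets $S\subseteq P$, $$e^P_k(\mathbf{u}_S)\,e^P_\ell(\mathbf{u}_S)\equiv e^P_\ell(\mathbf{u}_S)\,e^P_k(\mathbf{u}_S)\pmod{I^P_{\mathrm{plac}}}.$$
   Context: A poset is $(3+1)$-free if it has no induced subposet isomorphic to the disjoint union of a 3-element chain and a 1-element chain. For $a,b\in P$ write $a<_P b$ if $a$ is strictly less than $b$, and $a\sim_P b$ if $a,b$ are incomparable or equal. $\mathcal{U}_P=\mathbb{Z}\langle u_a : a\in P\rangle$ is the free associative ring on noncommuting variables $u_a$. For $S\subseteq P$ and $k\in\mathbb{Z}$, $e^P_k(\mathbf{u}_S)=\sum u_{a_1}u_{a_2}\cdots u_{a_k}$, summed over all $a_1,\dots,a_k\in S$ with $a_1>_P a_2>_P\cdots>_P a_k$; by convention $e^P_0(\mathbf{u}_S)=1$ (even if $S=\varnothing$) and $e^P_k(\mathbf{u}_S)=0$ for $k<0$ or $k>|S|$. $I^P_{\mathrm{plac}}$ is the two-sided ideal generated by: (1) $u_bu_au_c-u_bu_cu_a$ whenever $a<_P b$, $c\not<_P b$ and $a<_P c$; (2) $u_cu_au_b-u_au_cu_b$ whenever $b\not<_P a$, $b<_P c$ and $a<_P c$; (3) $u_cu_au_b-u_bu_cu_a$ whenever $a\sim_P b$, $b\sim_P c$ and $a<_P c$. *)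

From HB Require Import structures.
From mathcomp Require Import all_boot all_order all_algebra.
Set Implicit Arguments. Unset Strict Implicit. Unset Printing Implicit Defensive.
Import Order.TTheory GRing.Theory Num.Theory.
Local Open Scope order_scope.

(* The free associative ring Z<u_a : a in P> is modelled by coefficient
   functions on words (seq P): the element sum_w c_w u_{w_1}...u_{w_n}
   is represented by w |-> c_w.  All elements used below have finite
   support; ideal membership is defined inductively (see in_Iplac). *)

Section FreeRing.
Variables (d : Order.disp_t) (P : finPOrderType d).

Definition ncpoly := seq P -> int.

Definition nc_zero : ncpoly := fun _ => 0%R.
Definition nc_add (p q : ncpoly) : ncpoly := fun w => (p w + q w)%R.
Definition nc_opp (p : ncpoly) : ncpoly := fun w => (- p w)%R.
Definition nc_sub (p q : ncpoly) : ncpoly := nc_add p (nc_opp q).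
Definition nc_mul (p q : ncpoly) : ncpoly :=
  fun w => (\sum_(i < (size w).+1) p (take i w) * q (drop i w))%R.
Definition nc_word (v : seq P) : ncpoly := fun w => if w == v then 1%R else 0%R.

Definition simP (a b : P) : bool := ~~ (a < b) && ~~ (b < a).

Definition free31 : Prop :=
  forall x y z w : P, x < y -> y < z ->
    ~ [/\ ~~ (w >=< x), ~~ (w >=< y) & ~~ (w >=< z)].

Definition plac_gen (g : ncpoly) : Prop :=
  exists a b c : P,
    [/\ a < b, ~~ (c < b), a < c & g = nc_sub (nc_word [:: b; a; c]) (nc_word [:: b; c; a])]
 \/ [/\ ~~ (b < a), b < c, a < c & g = nc_sub (nc_word [:: c; a; b]) (nc_word [:: a; c; b])]
 \/ [/\ simP a b, simP b c, a < c & g = nc_sub (nc_word [:: c; a; b]) (nc_word [:: b; c; a])].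

Inductive in_Iplac : ncpoly -> Prop :=
| Ip_zero : in_Iplac nc_zero
| Ip_gen g : plac_gen g -> in_Iplac g
| Ip_add p q : in_Iplac p -> in_Iplac q -> in_Iplac (nc_add p q)
| Ip_opp p : in_Iplac p -> in_Iplac (nc_opp p)
| Ip_mull v p : in_Iplac p -> in_Iplac (nc_mul (nc_word v) p)
| Ip_mulr v p : in_Iplac p -> in_Iplac (nc_mul p (nc_word v))
| Ip_ext p q : (forall w, p w = q w) -> in_Iplac p -> in_Iplac q.

(* e^P_k(u_S) = sum of u_{a_1}...u_{a_k} with a_i in S, a_1 > ... > a_k.
   For k < 0 or k > |S| no such word exists, giving 0; k = 0 gives 1. *)
Definition elemP (k : int) (S : {set P}) : ncpoly :=
  fun w => if [&& ((size w)%:Z == k)%R, all (fun a => a \in S) w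
              & sorted (fun a b => b < a) w] then 1%R else 0%R.

End FreeRing.

From mathcomp Require Import all_boot all_order all_algebra.
From mathcomp Require Import ring.
Set Implicit Arguments. Unset Strict Implicit. Unset Printing Implicit Defensive.
Import Order.TTheory GRing.Theory Num.Theory.
Local Open Scope ring_scope.
Local Open Scope order_scope.

(* A list A of words stands for the polynomial wsum A = sum_{w in A} u_w;
   lists are multiplied by pairwise concatenation ([wprod]) and [lcong A B]
   says wsum A - wsum B lies in I_plac.  Since e_k(u_S) = wsum (chains S k),
   where [chains S k] lists the decreasing words of length k in S, the
   theorem reduces to [chains_commute S], proved by strong induction on S:
   - if S contains a 3-antichain {x,y,z}, no word of a product of two chains
     contains all of x, y, z; as deleting the words containing a letter
     preserves I_plac, S reduces to S\x, S\y, S\z ([commute_antichain3]);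
   - if S has a maximum m, relations (1) and (2) move m through chains and S
     reduces to S\m ([chains_commute_top]);
   - otherwise S has two incomparable maximal elements m, m'; by
     (3+1)-freeness at most one element lies below m but not m' (and vice
     versa), and relations (1)-(3) reduce S to proper subsets
     ([chains_commute_two_max]). *)

Section NCAlgebra.
Variables (d : Order.disp_t) (P : finPOrderType d).
Local Notation word := (seq P).
Local Notation nc := (ncpoly P).

Definition nc_eq (p q : nc) := forall w, p w = q w.

Lemma Iplac_eq (p q : nc) : nc_eq p q -> in_Iplac p -> in_Iplac q.
Proof. by move=> H Hp; apply: Ip_ext Hp. Qed.

Lemma Iplac_addE (p q r : nc) : in_Iplac p -> in_Iplac q ->
  (forall w, r w = (p w + q w)%R) -> in_Iplac r.
Proof. by move=> Hp Hq H; apply: Iplac_eq (Ip_add Hp Hq) => w; rewrite H. Qed.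

Lemma Iplac_oppE (p r : nc) : in_Iplac p -> (forall w, r w = (- p w)%R) -> in_Iplac r.
Proof. by move=> Hp H; apply: Iplac_eq (Ip_opp Hp) => w; rewrite H. Qed.

Lemma Iplac_subE (p q r : nc) : in_Iplac p -> in_Iplac q ->
  (forall w, r w = (p w - q w)%R) -> in_Iplac r.
Proof. by move=> Hp Hq H; apply: Iplac_addE Hp (Ip_opp Hq) _ => w; rewrite H. Qed.

Lemma Iplac_zeroE (r : nc) : (forall w, r w = 0%R) -> in_Iplac r.
Proof. by move=> H; apply: (@Iplac_eq (@nc_zero _ P)) (Ip_zero _) => w; rewrite H. Qed.

Lemma take_eq_size (w v : word) (i : nat) : (i <= size w)%N -> take i w = v -> i = size v.
Proof. by move=> Hi <-; rewrite size_take_min; apply/esym/minn_idPl. Qed.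

Lemma nc_mul_wordl (v : word) (p : nc) (w : word) :
  nc_mul (nc_word v) p w =
  if ((size v <= size w)%N && (take (size v) w == v)) then p (drop (size v) w) else 0%R.
Proof.
rewrite /nc_mul /nc_word.
case: ifP => [/andP [Hs /eqP Ht]|Hn].
  have Hlt : (size v < (size w).+1)%N by [].
  rewrite (bigD1 (Ordinal Hlt)) //= Ht eqxx mul1r big1 ?addr0 // => i /eqP Hi.
  case: ifP => [/eqP Htk|]; last by rewrite mul0r.
  exfalso; apply: Hi; apply: val_inj => /=.
  by apply: take_eq_size Htk; rewrite -ltnS.
rewrite big1 // => i _; case: ifP => [/eqP Htk|]; last by rewrite mul0r.
have Hi := take_eq_size (ltnSE (ltn_ord i)) Htk.
by move: Hn; rewrite -Hi (ltnSE (ltn_ord i)) Htk eqxx.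
Qed.

Lemma nc_mul_words (u v : word) : nc_eq (nc_mul (nc_word u) (nc_word v)) (nc_word (u ++ v)).
Proof.
move=> w; rewrite nc_mul_wordl /nc_word.
case: ifP => [/andP [Hs /eqP Ht]|Hn].
  have Hw : w = u ++ drop (size u) w by rewrite -{1}(cat_take_drop (size u) w) Ht.
  rewrite {2}Hw eqseq_cat // eqxx /=.
  by case: (_ == v).
case: eqP => // Hw; exfalso; move: Hn.
by rewrite Hw size_cat leq_addr take_size_cat // eqxx.
Qed.

Lemma nc_mulDl (p q r : nc) : nc_eq (nc_mul (nc_add p q) r) (nc_add (nc_mul p r) (nc_mul q r)).
Proof. by move=> w; rewrite /nc_mul /nc_add -big_split /=; apply: eq_bigr => i _; rewrite mulrDl. Qed.

Lemma nc_mulDr (p q r : nc) : nc_eq (nc_mul p (nc_add q r)) (nc_add (nc_mul p q) (nc_mul p r)).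
Proof. by move=> w; rewrite /nc_mul /nc_add -big_split /=; apply: eq_bigr => i _; rewrite mulrDr. Qed.

Lemma nc_mulNl (p r : nc) : nc_eq (nc_mul (nc_opp p) r) (nc_opp (nc_mul p r)).
Proof. by move=> w; rewrite /nc_mul /nc_opp -sumrN; apply: eq_bigr => i _; rewrite mulNr. Qed.

Lemma nc_mulNr (p r : nc) : nc_eq (nc_mul p (nc_opp r)) (nc_opp (nc_mul p r)).
Proof. by move=> w; rewrite /nc_mul /nc_opp -sumrN; apply: eq_bigr => i _; rewrite mulrN. Qed.

Lemma nc_mul0l (r : nc) : nc_eq (nc_mul (@nc_zero _ P) r) (@nc_zero _ P).
Proof. by move=> w; rewrite /nc_mul /(@nc_zero _ P) big1 // => i _; rewrite mul0r. Qed.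

Lemma nc_mul0r (r : nc) : nc_eq (nc_mul r (@nc_zero _ P)) (@nc_zero _ P).
Proof. by move=> w; rewrite /nc_mul /(@nc_zero _ P) big1 // => i _; rewrite mulr0. Qed.

Lemma nc_mul_eql (p p' r : nc) : nc_eq p p' -> nc_eq (nc_mul p r) (nc_mul p' r).
Proof. by move=> H w; rewrite /nc_mul; apply: eq_bigr => i _; rewrite H. Qed.

Lemma nc_mul_eqr (p r r' : nc) : nc_eq r r' -> nc_eq (nc_mul p r) (nc_mul p r').
Proof. by move=> H w; rewrite /nc_mul; apply: eq_bigr => i _; rewrite H. Qed.

Definition wsum (L : seq word) : nc := fun w => (count_mem w L)%:Z.

Lemma wsum_nil : nc_eq (wsum [::]) (@nc_zero _ P). Proof. by []. Qed.

Lemma wsum_cons v L : nc_eq (wsum (v :: L)) (nc_add (nc_word v) (wsum L)).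
Proof. by move=> w; rewrite /wsum /nc_add /nc_word /= eq_sym; case: (w == v); rewrite ?PoszD. Qed.

Lemma wsum_cat L1 L2 : nc_eq (wsum (L1 ++ L2)) (nc_add (wsum L1) (wsum L2)).
Proof. by move=> w; rewrite /wsum /nc_add count_cat PoszD. Qed.

Lemma wsum_perm L1 L2 : perm_eq L1 L2 -> nc_eq (wsum L1) (wsum L2).
Proof. by move=> /permP H w; rewrite /wsum H. Qed.

Lemma Iplac_mull_wsum L p : in_Iplac p -> in_Iplac (nc_mul (wsum L) p).
Proof.
move=> Hp; elim: L => [|v L IH].
  by apply: Iplac_zeroE => w; rewrite (nc_mul_eql _ wsum_nil) nc_mul0l.
apply: Iplac_addE (Ip_mull v Hp) IH _ => w.
by rewrite (nc_mul_eql _ (wsum_cons v L)) nc_mulDl.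
Qed.

Lemma Iplac_mulr_wsum L p : in_Iplac p -> in_Iplac (nc_mul p (wsum L)).
Proof.
move=> Hp; elim: L => [|v L IH].
  by apply: Iplac_zeroE => w; rewrite (nc_mul_eqr _ wsum_nil) nc_mul0r.
apply: Iplac_addE (Ip_mulr v Hp) IH _ => w.
by rewrite (nc_mul_eqr _ (wsum_cons v L)) nc_mulDr.
Qed.

Definition wprod (A B : seq word) : seq word := flatten [seq [seq x ++ y | y <- B] | x <- A].

Lemma wprod_cons x A B : wprod (x :: A) B = [seq x ++ y | y <- B] ++ wprod A B.
Proof. by []. Qed.

Lemma wprod_nil A : wprod [::] A = [::]. Proof. by []. Qed.

Lemma wprod_nilr A : wprod A [::] = [::]. Proof. by elim: A. Qed.

Lemma wsum_map_cat v L : nc_eq (wsum [seq v ++ y | y <- L]) (nc_mul (nc_word v) (wsum L)).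
Proof.
elim: L => [|u L IH] w.
  by rewrite (nc_mul_eqr _ wsum_nil) nc_mul0r.
rewrite /= wsum_cons (nc_mul_eqr _ (wsum_cons u L)) nc_mulDr /nc_add IH.
by rewrite nc_mul_words.
Qed.

Lemma wsum_wprod A B : nc_eq (wsum (wprod A B)) (nc_mul (wsum A) (wsum B)).
Proof.
elim: A => [|x A IH] w.
  by rewrite (nc_mul_eql _ wsum_nil) nc_mul0l.
rewrite wprod_cons wsum_cat (nc_mul_eql _ (wsum_cons x A)) nc_mulDl /nc_add IH.
by rewrite wsum_map_cat.
Qed.

Definition lcong (A B : seq word) := in_Iplac (nc_sub (wsum A) (wsum B)).
Definition wcong (u v : word) := lcong [:: u] [:: v].

Lemma lcong_refl A : lcong A A.
Proof. by apply: Iplac_zeroE => w; rewrite /nc_sub /nc_add /nc_opp subrr. Qed.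

Lemma lcong_sym A B : lcong A B -> lcong B A.
Proof. by move=> H; apply: Iplac_oppE H _ => w; rewrite /nc_sub /nc_add /nc_opp opprB. Qed.

Lemma lcong_trans A B C : lcong A B -> lcong B C -> lcong A C.
Proof.
move=> H1 H2; apply: Iplac_addE H1 H2 _ => w.
by rewrite /nc_sub /nc_add /nc_opp addrA subrK.
Qed.

Lemma lcong_cat A B C D : lcong A B -> lcong C D -> lcong (A ++ C) (B ++ D).
Proof.
move=> H1 H2; apply: Iplac_addE H1 H2 _ => w.
rewrite /nc_sub /nc_add /nc_opp !wsum_cat /nc_add.
by rewrite opprD addrACA.
Qed.

Lemma lcong_eq A A' B B' : nc_eq (wsum A) (wsum A') -> nc_eq (wsum B) (wsum B') -> lcong A B -> lcong A' B'.
Proof. by move=> H1 H2 H; apply: Iplac_eq H => w; rewrite /nc_sub /nc_add /nc_opp H1 H2. Qed.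

Lemma lcong_perm A A' B B' : perm_eq A A' -> perm_eq B B' -> lcong A B -> lcong A' B'.
Proof. by move=> H1 H2; apply: lcong_eq; apply: wsum_perm. Qed.

Lemma lcong_mull M A B : lcong A B -> lcong (wprod M A) (wprod M B).
Proof.
move=> H; apply: Iplac_eq (Iplac_mull_wsum M H) => w.
rewrite /nc_sub nc_mulDr /nc_add (nc_mulNr _ _ w) /nc_opp.
by rewrite !wsum_wprod.
Qed.

Lemma lcong_mulr M A B : lcong A B -> lcong (wprod A M) (wprod B M).
Proof.
move=> H; apply: Iplac_eq (Iplac_mulr_wsum M H) => w.
rewrite /nc_sub nc_mulDl /nc_add (nc_mulNl _ _ w) /nc_opp.
by rewrite !wsum_wprod.
Qed.

Lemma lcong_map (T : eqType) (f g : T -> word) (L : seq T) :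
  (forall x, x \in L -> wcong (f x) (g x)) -> lcong (map f L) (map g L).
Proof.
elim: L => [|x L IH] H /=; first exact: lcong_refl.
apply: (@lcong_cat [:: f x] [:: g x]); first by apply: H; rewrite inE eqxx.
by apply: IH => y Hy; apply: H; rewrite inE Hy orbT.
Qed.

End NCAlgebra.

Section WordLists.
Variables (d : Order.disp_t) (P : finPOrderType d).
Local Notation word := (seq P).

Lemma wprod1l (u : word) (A : seq word) : wprod [:: u] A = [seq u ++ y | y <- A].
Proof. by rewrite /wprod /= cats0. Qed.

Lemma wprod1r (A : seq word) (v : word) : wprod A [:: v] = [seq x ++ v | x <- A].
Proof. by elim: A => //= x A IH; rewrite wprod_cons IH. Qed.

Lemma wprod11 (u v : word) : wprod [:: u] [:: v] = [:: u ++ v].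
Proof. by rewrite wprod1l. Qed.

Lemma wprod_unitl (A : seq word) : wprod [:: [::]] A = A.
Proof. by rewrite wprod1l map_id. Qed.

Lemma wprod_unitr (A : seq word) : wprod A [:: [::]] = A.
Proof. by rewrite wprod1r; elim: A => //= x A ->; rewrite cats0. Qed.

Lemma wprod_catl (A B C : seq word) : wprod (A ++ B) C = wprod A C ++ wprod B C.
Proof. by rewrite /wprod map_cat flatten_cat. Qed.

Lemma wprod_catr (A B C : seq word) : nc_eq (wsum (wprod A (B ++ C))) (wsum (wprod A B ++ wprod A C)).
Proof.
move=> w; rewrite wsum_cat wsum_wprod (nc_mul_eqr _ (wsum_cat B C)) nc_mulDr /nc_add.
by rewrite !wsum_wprod.
Qed.

Lemma wprod_map_cat (x : word) (B C : seq word) : wprod [seq x ++ y | y <- B] C = [seq x ++ y | y <- wprod B C].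
Proof.
elim: B => //= y B IH; rewrite wprod_cons IH map_cat -map_comp.
by congr (_ ++ _); apply: eq_map => z /=; rewrite catA.
Qed.

Lemma wprodA (A B C : seq word) : wprod (wprod A B) C = wprod A (wprod B C).
Proof. by elim: A => //= x A IH; rewrite !wprod_cons wprod_catl IH wprod_map_cat. Qed.

Lemma lcong_flatten (T : eqType) (F G : T -> seq word) (s : seq T) :
  (forall a, a \in s -> lcong (F a) (G a)) -> lcong (flatten (map F s)) (flatten (map G s)).
Proof.
elim: s => [|a s IH] H /=; first exact: lcong_refl.
apply: lcong_cat; first by apply: H; rewrite inE eqxx.
by apply: IH => b Hb; apply: H; rewrite inE Hb orbT.
Qed.

Lemma perm_flatten_cat (T : Type) (F G : T -> seq word) (s : seq T) :
  perm_eq (flatten [seq F a ++ G a | a <- s]) (flatten (map F s) ++ flatten (map G s)).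
Proof.
elim: s => [|a s IH] //=.
rewrite -!catA perm_cat2l.
apply: (perm_trans (perm_cat (perm_refl (G a)) IH)).
by rewrite perm_catCA.
Qed.

Lemma wprod1 (m : P) (B : seq word) : wprod [:: [:: m]] B = [seq m :: y | y <- B].
Proof. by rewrite wprod1l. Qed.

Lemma wprod_letters (s : seq P) (B : seq word) :
  wprod [seq [:: a] | a <- s] B = flatten [seq [seq a :: y | y <- B] | a <- s].
Proof. by rewrite /wprod -map_comp. Qed.

Lemma wprod1_cat (u : word) (B C : seq word) : wprod [:: u] (B ++ C) = wprod [:: u] B ++ wprod [:: u] C.
Proof. by rewrite !wprod1l map_cat. Qed.

Lemma wsum_wprod_perm (A A' B B' : seq word) : perm_eq A A' -> perm_eq B B' ->
  nc_eq (wsum (wprod A B)) (wsum (wprod A' B')).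
Proof.
move=> H1 H2 w; rewrite !wsum_wprod.
by rewrite (nc_mul_eql _ (wsum_perm H1)) (nc_mul_eqr _ (wsum_perm H2)).
Qed.

Lemma wsum_perm_eq (A B : seq word) : nc_eq (wsum A) (wsum B) -> perm_eq A B.
Proof.
move=> H; apply/allP => x _; apply/eqP.
by have := H x; rewrite /wsum => [[]].
Qed.

Lemma perm_wprod (A A' B B' : seq word) : perm_eq A A' -> perm_eq B B' ->
  perm_eq (wprod A B) (wprod A' B').
Proof. by move=> H1 H2; apply: wsum_perm_eq; apply: wsum_wprod_perm. Qed.

End WordLists.

Section PlacticRelations.
Variables (d : Order.disp_t) (P : finPOrderType d).
Local Notation word := (seq P).

Lemma wsum1 (u : word) : nc_eq (wsum [:: u]) (nc_word u).
Proof. by move=> w; rewrite /wsum /nc_word /= addn0 eq_sym; case: (w == u). Qed.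

Lemma wcong_gen (u v : word) : plac_gen (nc_sub (nc_word u) (nc_word v)) -> wcong u v.
Proof.
move=> H; apply: Iplac_eq (Ip_gen H) => w.
by rewrite /nc_sub /nc_add /nc_opp !wsum1.
Qed.

Lemma wcong_rel1 (a b c : P) : a < b -> ~~ (c < b) -> a < c -> wcong [:: b; a; c] [:: b; c; a].
Proof. by move=> H1 H2 H3; apply: wcong_gen; exists a, b, c; left. Qed.

Lemma wcong_rel2 (a b c : P) : ~~ (b < a) -> b < c -> a < c -> wcong [:: c; a; b] [:: a; c; b].
Proof. by move=> H1 H2 H3; apply: wcong_gen; exists a, b, c; right; left. Qed.

Lemma wcong_rel3 (a b c : P) : simP a b -> simP b c -> a < c -> wcong [:: c; a; b] [:: b; c; a].
Proof. by move=> H1 H2 H3; apply: wcong_gen; exists a, b, c; right; right. Qed.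

Lemma wcong_refl (u : word) : wcong u u. Proof. exact: lcong_refl. Qed.
Lemma wcong_sym (u v : word) : wcong u v -> wcong v u. Proof. exact: lcong_sym. Qed.
Lemma wcong_trans (u v w : word) : wcong u v -> wcong v w -> wcong u w. Proof. exact: lcong_trans. Qed.

Lemma wcong_ctx (x u v y : word) : wcong u v -> wcong (x ++ u ++ y) (x ++ v ++ y).
Proof.
move=> H; have H1 := lcong_mulr [:: y] (lcong_mull [:: x] H).
by move: H1; rewrite /wprod /= -!catA.
Qed.

Lemma wcong_pre (x u v : word) : wcong u v -> wcong (x ++ u) (x ++ v).
Proof. by move=> H; have := wcong_ctx x [::] H; rewrite !cats0. Qed.

Lemma wcong_suf (u v y : word) : wcong u v -> wcong (u ++ y) (v ++ y).
Proof. by move=> H; have := wcong_ctx [::] y H. Qed.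

Definition gtr := fun a b : P => b < a.

Lemma gtr_trans : transitive gtr.
Proof. by move=> b a c H1 H2; rewrite /gtr (lt_trans H2 H1). Qed.

(* Relation (1) lets a letter y travel left through a decreasing word C below
   it, as long as y is not below the letter x heading the chain:
   x C y == x y C. *)
Lemma wcong_bubble (x y : P) (C : word) : sorted gtr (x :: C) -> (forall c, c \in C -> c < y) ->
  ~~ (y < x) -> wcong (x :: C ++ [:: y]) (x :: y :: C).
Proof.
elim: C x => [|c C IH] x Hs Hy Hyx; first exact: wcong_refl.
move: Hs => /= /andP [Hcx Hs].
have Hcy : c < y by apply: Hy; rewrite inE eqxx.
have H1 : wcong (c :: C ++ [:: y]) (c :: y :: C).
  apply: IH => //; first by move=> c' Hc'; apply: Hy; rewrite inE Hc' orbT.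
  by rewrite lt_gtF.
apply: wcong_trans (wcong_pre [:: x] H1) _.
exact: wcong_suf C (wcong_rel1 Hcx Hyx Hcy).
Qed.

End PlacticRelations.

Section Chains.
Variables (d : Order.disp_t) (P : finPOrderType d).
Local Notation word := (seq P).

Fixpoint chains (X : {set P}) (k : nat) {struct k} : seq word :=
  if k is k'.+1 then
    flatten [seq [seq a :: c | c <- chains [set y in X | y < a] k'] | a <- enum X]
  else [:: [::]].

Definition is_chain (X : {set P}) (k : nat) (w : word) :=
  [&& size w == k, all (fun a => a \in X) w & sorted (@gtr _ P) w].

Lemma path_gtr (a : P) (c : word) : path (@gtr _ P) a c = all (fun y => y < a) c && sorted (@gtr _ P) c.
Proof. by rewrite path_sortedE //; exact: gtr_trans. Qed.

Lemma chainsP (X : {set P}) (k : nat) (w : word) : (w \in chains X k) = is_chain X k w.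
Proof.
rewrite /is_chain; elim: k X w => [|k IH] X w /=.
  by rewrite inE; case: w.
apply/flatten_mapP/idP.
  case=> a; rewrite mem_enum => Ha /mapP [c Hc ->].
  move: Hc; rewrite IH => /and3P [Hs Hall Hso] /=.
  rewrite eqSS Hs Ha path_gtr Hso /= !andbT.
  apply/andP; split; apply/allP => y Hy; move: (allP Hall y Hy); rewrite inE;
    by case/andP.
case: w => // a c /and3P [Hs /andP [Ha Hall] Hso].
exists a; first by rewrite mem_enum.
apply/mapP; exists c => //.
move: Hso; rewrite /= path_gtr => /andP [Hlt Hso].
rewrite IH -(eqSS (size c)) Hs Hso /= andbT.
apply/allP => y Hy; rewrite inE (allP Hall y Hy) (allP Hlt y Hy).
by [].
Qed.

(* No word is listed twice, so wsum (chains X k) is the 0/1 indicator of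
   is_chain X k, i.e. the polynomial e_k(u_X). *)
Lemma uniq_flatten_map (T U : eqType) (F : T -> seq U) (s : seq T) :
  uniq s -> (forall a, a \in s -> uniq (F a)) ->
  (forall a b w, a \in s -> b \in s -> w \in F a -> w \in F b -> a = b) ->
  uniq (flatten (map F s)).
Proof.
elim: s => [|a s IH] //= /andP [Has Hs] HF Hdis.
rewrite cat_uniq HF ?inE ?eqxx // IH //; last first.
- by move=> x y w Hx Hy; apply: Hdis; rewrite inE ?Hx ?Hy orbT.
- by move=> x Hx; apply: HF; rewrite inE Hx orbT.
rewrite andbT; apply/hasP => [[w /flatten_mapP [b Hb Hwb] Hwa]].
have Hab : a = b by apply: Hdis Hwa Hwb; rewrite inE ?eqxx ?Hb ?orbT.
by move: Has; rewrite Hab Hb.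
Qed.

Lemma chains_uniq (X : {set P}) (k : nat) : uniq (chains X k).
Proof.
elim: k X => [|k IH] X //=.
apply: uniq_flatten_map; first exact: enum_uniq.
  by move=> a _; rewrite map_inj_uniq ?IH // => x y [].
by move=> a b w _ _ /mapP [c _ ->] /mapP [c' _ []].
Qed.

Lemma wsum_chains (X : {set P}) (k : nat) (w : word) :
  wsum (chains X k) w = (nat_of_bool (is_chain X k w))%:Z.
Proof. by rewrite /wsum count_uniq_mem ?chains_uniq // chainsP. Qed.

Lemma elemP_chains (X : {set P}) (k : nat) : nc_eq (elemP k%:Z X) (wsum (chains X k)).
Proof.
move=> w; rewrite wsum_chains /elemP /is_chain eqz_nat.
by case: ifP.
Qed.

Lemma elemP_neg (X : {set P}) (n : nat) : nc_eq (elemP (Negz n) X) (@nc_zero _ P).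
Proof. by move=> w; rewrite /elemP. Qed.

Lemma chains0 (X : {set P}) : chains X 0 = [:: [::]]. Proof. by []. Qed.

Lemma chains1 (X : {set P}) : chains X 1 = [seq [:: a] | a <- enum X].
Proof. by rewrite /= flatten_map1. Qed.

Lemma chainsS (X : {set P}) (k : nat) :
  chains X k.+1 = flatten [seq [seq a :: c | c <- chains [set y in X | y < a] k] | a <- enum X].
Proof. by []. Qed.

Lemma chains_set0 (k : nat) : chains set0 k.+1 = [::].
Proof. by rewrite chainsS enum_set0. Qed.

Lemma chain_mem_lt (x : P) (C : word) y : sorted (@gtr _ P) (x :: C) -> y \in C -> y < x.
Proof. by rewrite /= path_gtr => /andP [H _] Hy; apply: (allP H). Qed.

Lemma chains_below (D : {set P}) (a : P) (j : nat) (c : word) :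
  c \in chains [set y in D | y < a] j -> sorted (@gtr _ P) (a :: c) /\ (forall y, y \in c -> y \in D).
Proof.
rewrite chainsP /is_chain => /and3P [_ Hall Hs]; split.
  rewrite /= path_gtr Hs andbT; apply/allP => y Hy.
  by move: (allP Hall y Hy); rewrite inE => /andP [].
by move=> y Hy; move: (allP Hall y Hy); rewrite inE => /andP [].
Qed.

Lemma chains_below_top (U : {set P}) (b : P) (i : nat) (C : word) :
  (forall y, y \in U -> y < b) -> C \in chains U i -> sorted (@gtr _ P) (b :: C).
Proof.
move=> HU; rewrite chainsP /is_chain => /and3P [_ Hall Hs].
by rewrite /= path_gtr Hs andbT; apply/allP => y Hy; apply: HU; apply: (allP Hall).
Qed.

Lemma chains_mem (U : {set P}) (i : nat) (C : word) y :
  C \in chains U i -> y \in C -> y \in U.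
Proof. by rewrite chainsP /is_chain => /and3P [_ Hall _] Hy; apply: (allP Hall). Qed.

Lemma head_not_below (D : {set P}) (a : P) (j : nat) (c : word) :
  c \in chains D j -> ~~ all (fun y => y \in [set y in D | y < a]) c ->
  exists x c', [/\ c = x :: c', ~~ (x < a) & x \in D].
Proof.
rewrite chainsP /is_chain; case: c => // x c' /and3P [_ /andP [Hx Hall] Hs] Hn.
exists x, c'; split => //; apply/negP => Hxa; move/negP: Hn; apply.
move: Hs; rewrite /= path_gtr => /andP [Hlt _].
rewrite /= !inE Hx Hxa /=; apply/allP => y Hy; rewrite inE (allP Hall y Hy) /=.
exact: lt_trans (allP Hlt y Hy) Hxa.
Qed.

Lemma chains_sub_split (X Y : {set P}) (k : nat) : Y \subset X ->
  perm_eq (chains X k) (chains Y k ++ [seq c <- chains X k | ~~ all (fun a => a \in Y) c]).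
Proof.
move=> HYX.
rewrite -(perm_filterC (fun c => all (fun a => a \in Y) c) (chains X k)).
apply: perm_cat => //.
apply: uniq_perm; rewrite ?filter_uniq ?chains_uniq //.
move=> w; rewrite mem_filter !chainsP /is_chain.
apply/andP/idP.
  by case=> Hall /and3P [-> _ ->]; rewrite Hall.
case/and3P=> Hs Hall Hso; split => //; rewrite Hs Hso andbT.
by apply/allP => a Ha; apply: (subsetP HYX); apply: (allP Hall).
Qed.

Lemma chains_split_max (X : {set P}) (m : P) (j : nat) : m \in X ->
  (forall y, y \in X -> ~~ (m < y)) ->
  perm_eq (chains X j.+1)
    (chains (X :\ m) j.+1 ++ [seq m :: c | c <- chains [set y in X | y < m] j]).
Proof.
move=> Hm Hmax.
apply: uniq_perm; rewrite ?chains_uniq //.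
  rewrite cat_uniq chains_uniq map_inj_uniq ?chains_uniq ?andbT; last by move=> x y [].
  apply/hasP => [[w /mapP [c _ ->]]].
  rewrite chainsP /is_chain /= => /and3P [_ /andP [] ].
  by rewrite !inE eqxx.
move=> w; rewrite mem_cat !chainsP /is_chain.
apply/idP/idP.
  case: w => // a c /and3P [Hs /andP [Ha Hall] Hso].
  move: (Hso); rewrite /= path_gtr => /andP [Hlt Hso'].
  case: (eqVneq a m) => [Ham|Ham].
    apply/orP; right; apply/mapP; exists c; last by rewrite Ham.
    rewrite chainsP /is_chain -(eqSS (size c)) Hs Hso' andbT.
    apply/allP => y Hy; rewrite inE (allP Hall y Hy) /=.
    by rewrite -Ham (allP Hlt y Hy).
  apply/orP; left; apply/and3P; split => //; last by rewrite /= ?path_gtr Hlt Hso'.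
  rewrite /= !inE Ham Ha /=.
  apply/allP => y Hy; rewrite !inE (allP Hall y Hy) andbT.
  apply/eqP => Hym; move: (allP Hlt y Hy); rewrite Hym => Hma.
  by move: (Hmax a Ha); rewrite Hma.
case/orP.
  case/and3P=> -> Hall ->; rewrite andbT /=.
  by apply/allP => y Hy; move: (allP Hall y Hy); rewrite inE => /andP [].
case/mapP => c; rewrite chainsP /is_chain => /and3P [Hs Hall Hso] ->.
rewrite /= eqSS Hs Hm path_gtr Hso !andbT /=.
apply/andP; split; apply/allP => y Hy; move: (allP Hall y Hy); rewrite inE;
  by case/andP.
Qed.

End Chains.

Section Projection.
Variables (d : Order.disp_t) (P : finPOrderType d).
Local Notation word := (seq P).
Local Notation nc := (ncpoly P).

Definition avoid (x : P) (p : nc) : nc := fun w => if x \in w then 0%R else p w.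
Definition present (x : P) (p : nc) : nc := nc_sub p (avoid x p).

Lemma presentE x p w : present x p w = if x \in w then p w else 0%R.
Proof. by rewrite /present /nc_sub /nc_add /nc_opp /avoid; case: ifP; rewrite ?subr0 ?subrr. Qed.

(* avoid x is additive and, since x occurs in u ++ v iff it occurs in u or
   in v, multiplicative. *)
Lemma avoid_mul x (p q : nc) : nc_eq (avoid x (nc_mul p q)) (nc_mul (avoid x p) (avoid x q)).
Proof.
move=> w; rewrite /avoid /nc_mul; case: ifP => Hw.
  rewrite big1 // => i _.
  have : (x \in take i w) || (x \in drop i w) by rewrite -mem_cat cat_take_drop.
  by case/orP => ->; rewrite ?mul0r ?mulr0.
apply: eq_bigr => i _.
have : (x \in take i w) || (x \in drop i w) = false by rewrite -mem_cat cat_take_drop.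
by case: (x \in take i w); case: (x \in drop i w).
Qed.

Lemma avoid_sub x (p q : nc) : nc_eq (avoid x (nc_sub p q)) (nc_sub (avoid x p) (avoid x q)).
Proof. by move=> w; rewrite /avoid /nc_sub /nc_add /nc_opp; case: ifP; rewrite ?subr0. Qed.

Lemma avoid_word x (v : word) :
  nc_eq (avoid x (nc_word v)) (if x \in v then @nc_zero _ P else nc_word v).
Proof.
move=> w; rewrite /avoid /nc_word /nc_zero.
case Hxv: (x \in v); case Hxw: (x \in w) => //=; case: eqP => // Ewv;
  by move: Hxw; rewrite Ewv Hxv.
Qed.

(* The generators of I_plac are differences of words with the same letters. *)
Lemma avoid_gen x (u1 u2 : word) : (x \in u1) = (x \in u2) ->
  in_Iplac (nc_sub (nc_word u1) (nc_word u2)) ->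
  in_Iplac (avoid x (nc_sub (nc_word u1) (nc_word u2))).
Proof.
move=> Hx H; case Hx1: (x \in u1).
  apply: Iplac_zeroE => w; rewrite /avoid /nc_sub /nc_add /nc_opp /nc_word.
  have [->|N1] := eqVneq w u1; first by rewrite Hx1.
  have [->|N2] := eqVneq w u2; first by rewrite -Hx Hx1.
  by case: ifP => //; rewrite subr0.
apply: Iplac_eq H => w; rewrite /avoid /nc_sub /nc_add /nc_opp /nc_word.
case Hw: (x \in w) => //.
have [E1|N1] := eqVneq w u1; first by move: Hw; rewrite E1 Hx1.
have [E2|N2] := eqVneq w u2; first by move: Hw; rewrite E2 -Hx Hx1.
by rewrite subr0.
Qed.

Lemma avoid_I x p : in_Iplac p -> in_Iplac (avoid x p).
Proof.
elim=> {p}.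
- by apply: Iplac_zeroE => w; rewrite /avoid; case: ifP.
- move=> g Hg; have HI := Ip_gen Hg.
  move: Hg HI => [a [b [c [[_ _ _ ->]|[[_ _ _ ->]|[_ _ _ ->]]]]]] HI;
    apply: avoid_gen HI; rewrite !inE;
    by case: (x == a); case: (x == b); case: (x == c).
- move=> p q _ Hp _ Hq; apply: Iplac_addE Hp Hq _ => w.
  by rewrite /avoid /nc_add; case: ifP; rewrite ?addr0.
- move=> p _ Hp; apply: Iplac_oppE Hp _ => w.
  by rewrite /avoid /nc_opp; case: ifP; rewrite ?oppr0.
- move=> v p _ Hp; have E w := avoid_mul x (nc_word v) p w.
  case Hxv: (x \in v).
    by apply: Iplac_zeroE => w; rewrite E (nc_mul_eql _ (avoid_word x v)) Hxv nc_mul0l.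
  by apply: Iplac_eq (Ip_mull v Hp) => w; rewrite E (nc_mul_eql _ (avoid_word x v)) Hxv.
- move=> v p _ Hp; have E w := avoid_mul x p (nc_word v) w.
  case Hxv: (x \in v).
    by apply: Iplac_zeroE => w; rewrite E (nc_mul_eqr _ (avoid_word x v)) Hxv nc_mul0r.
  by apply: Iplac_eq (Ip_mulr v Hp) => w; rewrite E (nc_mul_eqr _ (avoid_word x v)) Hxv.
- by move=> p q H _ Hp; apply: Iplac_eq Hp => w; rewrite /avoid H.
Qed.

Lemma present_I x p : in_Iplac p -> in_Iplac (present x p).
Proof. by move=> H; apply: Iplac_subE H (avoid_I x H) _. Qed.

Lemma avoid_elemP x (k : int) (X : {set P}) : nc_eq (avoid x (elemP k X)) (elemP k (X :\ x)).
Proof.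
move=> w; rewrite /avoid /elemP; case: ifP => Hw.
  case: ifP => // /and3P [_ /allP H _].
  by move: (H x Hw); rewrite !inE eqxx.
congr (if _ then _ else _); congr [&& _, _ & _].
apply: eq_in_all => y Hy; rewrite !inE.
by case: eqP => // Hyx; move: Hw; rewrite -Hyx Hy.
Qed.

Definition elem_comm (X : {set P}) (k l : int) : nc :=
  nc_sub (nc_mul (elemP k X) (elemP l X)) (nc_mul (elemP l X) (elemP k X)).

Lemma avoid_elem_comm x X k l : nc_eq (avoid x (elem_comm X k l)) (elem_comm (X :\ x) k l).
Proof.
move=> w; rewrite /elem_comm avoid_sub /nc_sub /nc_add /nc_opp !avoid_mul.
by rewrite !(nc_mul_eql _ (avoid_elemP _ _ _)) !(nc_mul_eqr _ (avoid_elemP _ _ _)).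
Qed.

(* Two chains contain no antichain of size 3, so products of two chain
   monomials vanish on words containing such an antichain. *)
Lemma sorted_comparable (u : word) x y : sorted (@gtr _ P) u -> x \in u -> y \in u -> x >=< y.
Proof.
elim: u => // a u IH /= Hs; move: (Hs); rewrite path_gtr => /andP [Hlt Hs'].
rewrite !inE => /orP [/eqP ->|Hx] /orP [/eqP ->|Hy].
- exact: comparablexx.
- by apply: gt_comparable; apply: (allP Hlt).
- by apply: lt_comparable; apply: (allP Hlt).
- exact: IH.
Qed.

Lemma no_antichain3 (u v : word) x y z : sorted (@gtr _ P) u -> sorted (@gtr _ P) v ->
  ~~ (x >=< y) -> ~~ (y >=< z) -> ~~ (x >=< z) ->
  x \in u ++ v -> y \in u ++ v -> z \in u ++ v -> False.
Proof.
move=> Hu Hv Hxy Hyz Hxz; rewrite !mem_cat.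
case/orP=> Hx; case/orP=> Hy; case/orP=> Hz.
all: first [ by move: Hxy; rewrite (sorted_comparable Hu Hx Hy)
           | by move: Hxy; rewrite (sorted_comparable Hv Hx Hy)
           | by move: Hyz; rewrite (sorted_comparable Hu Hy Hz)
           | by move: Hyz; rewrite (sorted_comparable Hv Hy Hz)
           | by move: Hxz; rewrite (sorted_comparable Hu Hx Hz)
           | by move: Hxz; rewrite (sorted_comparable Hv Hx Hz) ].
Qed.

Lemma elemP_mul_antichain3 (a b : int) (X : {set P}) (u v : word) x y z :
  ~~ (x >=< y) -> ~~ (y >=< z) -> ~~ (x >=< z) ->
  x \in u ++ v -> y \in u ++ v -> z \in u ++ v -> (elemP a X u * elemP b X v = 0)%R.
Proof.
move=> Hxy Hyz Hxz Hx Hy Hz; rewrite /elemP.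
case: ifP => [/and3P [_ _ Hu]|]; last by rewrite mul0r.
case: ifP => [/and3P [_ _ Hv]|]; last by rewrite mulr0.
by exfalso; apply: (no_antichain3 Hu Hv Hxy Hyz Hxz Hx Hy Hz).
Qed.

(* Inclusion-exclusion on the letters x, y, z: a polynomial with no term
   containing all three letters lies in I_plac as soon as its x-, y- and
   z-avoiding parts do. *)
Lemma Iplac_avoid3 x y z (q : nc) :
  (forall w, x \in w -> y \in w -> z \in w -> q w = 0%R) ->
  in_Iplac (avoid x q) -> in_Iplac (avoid y q) -> in_Iplac (avoid z q) -> in_Iplac q.
Proof.
move=> Hq Ax Ay Az.
have Z : in_Iplac (present z (present y (present x q))).
  apply: Iplac_zeroE => w; rewrite !presentE.
  by case: ifP => // Hz; case: ifP => // Hy; case: ifP => // Hx; apply: Hq.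
have Yz : in_Iplac (avoid z (present y (present x q))).
  apply: Iplac_eq (present_I y (present_I x Az)) => w.
  by rewrite /avoid !presentE; case: (z \in w); case: (y \in w); case: (x \in w).
have Yy : in_Iplac (present y (present x q)).
  apply: Iplac_addE Yz Z _ => w; rewrite /avoid !presentE.
  by case: (z \in w); case: (y \in w); case: (x \in w); rewrite ?add0r ?addr0.
have Xy : in_Iplac (avoid y (present x q)).
  apply: Iplac_eq (present_I x Ay) => w.
  by rewrite /avoid !presentE; case: (y \in w); case: (x \in w).
have Xx : in_Iplac (present x q).
  apply: Iplac_addE Xy Yy _ => w; rewrite /avoid !presentE.
  by case: (y \in w); case: (x \in w); rewrite ?add0r ?addr0.
apply: Iplac_addE Ax Xx _ => w; rewrite /avoid !presentE.
by case: (x \in w); rewrite ?add0r ?addr0.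
Qed.

Lemma commute_antichain3 (X : {set P}) x y z k l :
  ~~ (x >=< y) -> ~~ (y >=< z) -> ~~ (x >=< z) ->
  in_Iplac (elem_comm (X :\ x) k l) -> in_Iplac (elem_comm (X :\ y) k l) ->
  in_Iplac (elem_comm (X :\ z) k l) ->
  in_Iplac (elem_comm X k l).
Proof.
move=> Hxy Hyz Hxz H1 H2 H3; apply: (@Iplac_avoid3 x y z).
- move=> w Hx Hy Hz; rewrite /elem_comm /nc_sub /nc_add /nc_opp /nc_mul.
  rewrite !big1 ?subrr // => i _;
    by apply: (elemP_mul_antichain3 _ _ _ Hxy Hyz Hxz); rewrite cat_take_drop.
- by apply: Iplac_eq H1 => w; rewrite avoid_elem_comm.
- by apply: Iplac_eq H2 => w; rewrite avoid_elem_comm.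
- by apply: Iplac_eq H3 => w; rewrite avoid_elem_comm.
Qed.

End Projection.

Section TopElement.
Variables (d : Order.disp_t) (P : finPOrderType d).

Definition chains_commute (X : {set P}) := forall k l : nat,
  lcong (wprod (chains X k) (chains X l)) (wprod (chains X l) (chains X k)).

Lemma chains_then_top (D : {set P}) (m : P) (j : nat) : (forall y, y \in D -> y < m) ->
  lcong (wprod (chains D j.+1) [:: [:: m]])
        (flatten [seq [seq a :: m :: c | c <- chains [set y in D | y < a] j] | a <- enum D]).
Proof.
move=> HD; rewrite wprod1r chainsS map_flatten -map_comp.
apply: lcong_flatten => a; rewrite mem_enum => HaD /=.
rewrite -map_comp; apply: lcong_map => c Hc /=.
have [Hs Hc'] := chains_below Hc.
apply: wcong_bubble => //; first by move=> y Hy; apply: HD; apply: Hc'.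
by rewrite lt_gtF // HD.
Qed.

(* The chains a :: c with c below a are handled by [chains_then_top], the
   remaining terms a m c with c not below a by relation (2). *)
Lemma top_exchange (D : {set P}) (m : P) (j : nat) : (forall y, y \in D -> y < m) ->
  lcong (wprod (chains D j.+1) [:: [:: m]] ++ wprod [:: [:: m]] (wprod (chains D 1) (chains D j)))
     (wprod [:: [:: m]] (chains D j.+1) ++ wprod (chains D 1) (wprod [:: [:: m]] (chains D j))).
Proof.
move=> HD.
have Ha := chains_then_top j HD.
set Ea := fun a => chains [set y in D | y < a] j.
have Hb : wprod (chains D 1) (wprod [:: [:: m]] (chains D j))
          = flatten [seq [seq a :: m :: c | c <- chains D j] | a <- enum D].
  by rewrite chains1 wprod_letters wprod1; congr flatten; apply: eq_map => a; rewrite -map_comp.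
have Hc : wprod [:: [:: m]] (wprod (chains D 1) (chains D j))
          = flatten [seq [seq m :: a :: c | c <- chains D j] | a <- enum D].
  by rewrite chains1 wprod_letters wprod1 map_flatten -map_comp; congr flatten; apply: eq_map => a /=; rewrite -map_comp.
have Hd : wprod [:: [:: m]] (chains D j.+1)
          = flatten [seq [seq m :: a :: c | c <- Ea a] | a <- enum D].
  by rewrite wprod1 chainsS map_flatten -map_comp; congr flatten; apply: eq_map => a /=; rewrite -map_comp.
rewrite Hb Hc Hd.
apply: lcong_trans (lcong_cat Ha (lcong_refl _)) _.
apply: lcong_perm (perm_flatten_cat _ _ _) (perm_flatten_cat _ _ _) _.
apply: lcong_flatten => a; rewrite mem_enum => HaD.
have HY : [set y in D | y < a] \subset D by apply/subsetP => y; rewrite inE => /andP [].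
have Hp := chains_sub_split j HY.
set R := [seq c <- chains D j | ~~ all (fun y => y \in [set y in D | y < a]) c] in Hp.
apply: (lcong_perm (A:=[seq a :: m :: c | c <- Ea a] ++ [seq m :: a :: c | c <- Ea a] ++ [seq m :: a :: c | c <- R])
                 (B:=[seq a :: m :: c | c <- Ea a] ++ [seq m :: a :: c | c <- Ea a] ++ [seq a :: m :: c | c <- R])).
- by rewrite perm_cat2l -map_cat perm_map // perm_sym.
- rewrite perm_catCA perm_cat2l -map_cat perm_map // perm_sym.
  exact: Hp.
apply: lcong_cat; first exact: lcong_refl.
apply: lcong_cat; first exact: lcong_refl.
apply: lcong_map => c; rewrite mem_filter => /andP [Hn Hc0].
have [x [c' [-> Hxa HxD]]] := head_not_below Hc0 Hn.
exact: wcong_suf c' (wcong_rel2 Hxa (HD x HxD) (HD a HaD)).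
Qed.

Lemma top_square (Z : {set P}) (z : P) (a b : nat) : (forall y, y \in Z -> y < z) ->
  lcong (wprod (wprod [:: [:: z]] (chains Z a)) (wprod [:: [:: z]] (chains Z b)))
     (wprod [:: [:: z; z]] (wprod (chains Z a) (chains Z b))).
Proof.
move=> HZ.
have E1 : wprod (wprod [:: [:: z]] (chains Z a)) (wprod [:: [:: z]] (chains Z b))
  = wprod (wprod [:: [:: z]] (wprod (chains Z a) [:: [:: z]])) (chains Z b) by rewrite !wprodA.
have E2 : wprod [:: [:: z; z]] (wprod (chains Z a) (chains Z b))
  = wprod (wprod [:: [:: z; z]] (chains Z a)) (chains Z b) by rewrite wprodA.
rewrite E1 E2; apply: lcong_mulr.
rewrite wprod1r wprod1 -map_comp wprod1l.
apply: lcong_map => c Hc /=.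
apply: wcong_bubble; last by rewrite ltxx.
  rewrite /= path_gtr; move: Hc; rewrite chainsP /is_chain => /and3P [_ Hall ->].
  by rewrite andbT; apply/allP => y Hy; apply: HZ; apply: (allP Hall).
by move=> y Hy; apply: HZ; move: Hc; rewrite chainsP /is_chain => /and3P [_ Hall _]; apply: (allP Hall).
Qed.

End TopElement.

Ltac expand_products := repeat (rewrite ?(wprod_catl (chains _ _)) ?(wprod_catl (wprod _ _))
   ?(wprod_catr _ (chains _ _)) ?(wprod_catr _ (wprod _ _)) ?(wsum_cat (chains _ _)) ?(wsum_cat (wprod _ _)) /nc_add).

Section TopElementCommute.
Local Opaque wprod.
Variables (d : Order.disp_t) (P : finPOrderType d).

(* Case of a maximum m of S: splitting each chain of S by whether it starts
   with m, the commutator for S is an integer combination of commutators for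
   S \ m and of the congruences [top_exchange] and [top_square]. *)
Lemma chains_commute_top (S : {set P}) (m : P) : m \in S -> (forall y, y \in S -> y != m -> y < m) ->
  chains_commute (S :\ m) -> chains_commute S.
Proof.
move=> Hm Hmax IH k l.
case: k => [|k']; first by rewrite chains0 wprod_unitl wprod_unitr; exact: lcong_refl.
case: l => [|l']; first by rewrite chains0 wprod_unitl wprod_unitr; exact: lcong_refl.
have HD : forall y, y \in S :\ m -> y < m.
  by move=> y; rewrite !inE => /andP [Hym HyS]; apply: Hmax.
have Hset : [set y in S | y < m] = S :\ m.
  apply/setP => y; rewrite !inE; apply/idP/idP.
    by case/andP => -> Hy; rewrite andbT; apply/eqP => E; move: Hy; rewrite E ltxx.
  by case/andP => Hy HyS; rewrite HyS; apply: Hmax.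
have Hsp j : perm_eq (chains S j.+1) (chains (S :\ m) j.+1 ++ wprod [:: [:: m]] (chains (S :\ m) j)).
  have Hmx : forall y, y \in S -> ~~ (m < y).
    move=> y Hy; case: (eqVneq y m) => [->|Hne]; first by rewrite ltxx.
    by rewrite lt_gtF // Hmax.
  by have := chains_split_max j Hm Hmx; rewrite Hset wprod1.
set D := S :\ m.
set m1 := [:: [:: m]].
have C_D := IH k'.+1 l'.+1.
have C_mSk := lcong_mull m1 (IH k'.+1 l').
have C_mSl := lcong_mull m1 (IH k' l'.+1).
have C_mm := lcong_mull [:: [:: m; m]] (IH k' l').
have C_Em := lcong_mull (wprod (chains D 1) m1) (IH k' l').
have C_mE := lcong_mull (wprod m1 (chains D 1)) (IH k' l').
have X_k := lcong_mulr (chains D l') (top_exchange k' HD).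
have X_l := lcong_mulr (chains D k') (top_exchange l' HD).
have Q_kl := top_square k' l' HD.
have Q_lk := top_square l' k' HD.
apply: (Iplac_eq _ (Ip_add C_D (Ip_add X_k (Ip_add (Ip_opp X_l) (Ip_add (Ip_opp C_mE)
  (Ip_add C_mSk (Ip_add C_Em (Ip_add C_mSl (Ip_add Q_kl (Ip_add (Ip_opp Q_lk) C_mm)))))))))) => w.
rewrite /nc_sub /nc_add /nc_opp.
rewrite (wsum_wprod_perm (Hsp k') (Hsp l')) (wsum_wprod_perm (Hsp l') (Hsp k')).
expand_products.
rewrite !wprodA.
ring.
Qed.

End TopElementCommute.

Section Escapes.
Variables (d : Order.disp_t) (P : finPOrderType d).

(* Setting of the two-maxima case: D is the set of elements below m, A those
   below both m and m'.  A chain of D "escapes" when it leaves A, i.e. when it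
   contains an element of D not below m'; width 2 and (3+1)-freeness allow
   at most one such element b, so escaping chains are b followed by chains
   below b. *)
Definition escape (D A : {set P}) (i : nat) :=
  [seq C <- chains D i | ~~ all (fun a => a \in A) C].

Lemma escape0 (D A : {set P}) : escape D A 0 = [::].
Proof. by []. Qed.

Lemma escape_nil (D A : {set P}) (i : nat) : (forall y, y \in D -> y \in A) -> escape D A i = [::].
Proof.
move=> H; rewrite /escape (@eq_in_filter _ _ pred0) ?filter_pred0 // => C.
rewrite chainsP /is_chain => /and3P [_ Hall _] /=.
by apply/negbTE; rewrite negbK; apply/allP => y Hy; apply: H; apply: (allP Hall).
Qed.

Lemma escape_cases (D A : {set P}) (m' : P) :
  (forall y, y \in D -> (y \in A) = (y < m')) ->
  (forall i, escape D A i = [::]) \/ exists2 b, b \in D & ~~ (b < m').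
Proof.
move=> HA; case: (boolP [exists y in D, ~~ (y < m')]) => [/exists_inP [b HbD Hb]|Hno].
  by right; exists b.
left=> i; apply: escape_nil => y Hy; rewrite HA //; apply/contraT => Hy'.
by case/negP: Hno; apply/exists_inP; exists y.
Qed.

Lemma escapeS (D A : {set P}) (m' b : P) (i : nat) :
  (forall y, y \in D -> (y \in A) = (y < m')) ->
  (forall y z, y \in D -> z \in D -> ~~ (y < m') -> ~~ (z < m') -> y = z) ->
  b \in D -> ~~ (b < m') ->
  perm_eq (escape D A i.+1) (wprod [:: [:: b]] (chains [set y in D | y < b] i)).
Proof.
move=> HA UB HbD Hb.
apply: uniq_perm; first by rewrite filter_uniq ?chains_uniq.
  by rewrite wprod1 map_inj_uniq ?chains_uniq // => x y [].
move=> C; rewrite mem_filter wprod1 chainsP /is_chain.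
apply/idP/idP.
  case/andP=> Hn; case: C Hn => // x C' Hn /and3P [Hs /andP [HxD Hall] Hso].
  have [y Hy HyA] : exists2 y, y \in x :: C' & y \notin A.
    by apply/hasP; rewrite has_predC.
  have HyD : y \in D by move: Hy; rewrite inE => /orP [/eqP ->|Hy] //; apply: (allP Hall).
  have Hy' : ~~ (y < m') by rewrite -HA.
  have Hyb : y = b := UB y b HyD HbD Hy' Hb.
  have Hxb : x = b.
    move: Hy; rewrite inE => /orP [/eqP <-|HyC'] //.
    have Hyx := chain_mem_lt Hso HyC'.
    have Hx' : ~~ (x < m').
      by apply/negP => Hx; move/negP: Hy'; apply; exact: lt_trans Hyx Hx.
    by move: Hyx; rewrite (UB x b HxD HbD Hx' Hb) -Hyb ltxx.
  apply/mapP; exists C'; last by rewrite Hxb.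
  rewrite chainsP /is_chain -(eqSS (size C')) Hs.
  move: Hso; rewrite /= path_gtr => /andP [Hlt ->]; rewrite andbT.
  apply/allP => z Hz; rewrite inE (allP Hall z Hz) /=.
  by rewrite -Hxb (allP Hlt z Hz).
case/mapP=> C' HC' ->; move: HC'; rewrite chainsP /is_chain => /and3P [Hs Hall Hso].
rewrite /= eqSS Hs HbD /= HA // (negbTE Hb) /= path_gtr Hso !andbT.
apply/andP; split; apply/allP => z Hz; move: (allP Hall z Hz); rewrite inE;
  by case/andP.
Qed.

(* m (chains of A ++ escaping chains) m' == m m' (chains of A) + m' m (escaping
   chains): m' moves left through a chain of A by relation (1), and past the
   escaper b with m by relation (3). *)
Lemma append_second_max (D A : {set P}) (m m' : P) (i : nat) :
  A \subset D ->
  (forall y, y \in D -> y < m) ->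
  (forall y, y \in D -> (y \in A) = (y < m')) ->
  (forall y z, y \in D -> z \in D -> ~~ (y < m') -> ~~ (z < m') -> y = z) ->
  (forall y, y \in D -> ~~ (m' < y)) ->
  simP m' m ->
  lcong (wprod (wprod [:: [:: m]] (chains A i ++ escape D A i)) [:: [:: m']])
     (wprod [:: [:: m; m']] (chains A i) ++ wprod [:: [:: m'; m]] (escape D A i)).
Proof.
move=> HAD HDm HA UB Hmax' Hmm'.
rewrite wprod1 wprod1r -map_comp.
rewrite map_cat; apply: lcong_cat.
  rewrite wprod1l; apply: lcong_map => C HC /=.
  move: (HC); rewrite chainsP /is_chain => /and3P [_ Hall Hso].
  have HCD : forall y, y \in C -> y \in D by move=> y Hy; apply: (subsetP HAD); apply: (allP Hall).
  apply: wcong_bubble.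
  - rewrite /= path_gtr Hso andbT; apply/allP => y Hy; exact: HDm (HCD y Hy).
  - by move=> y Hy; rewrite -HA ?HCD //; apply: (allP Hall).
  - by case/andP: Hmm'.
rewrite wprod1l; apply: lcong_map => C; rewrite mem_filter => /andP [Hn HC] /=.
move: HC Hn; rewrite chainsP /is_chain; case: C => // x C' /and3P [_ /andP [HxD Hall] Hso] Hn.
have Hx' : ~~ (x < m').
  apply/negP => Hx; move/negP: Hn; apply; rewrite /= HA // Hx /=.
  apply/allP => y Hy; rewrite HA; last by apply: (allP Hall).
  exact: lt_trans (chain_mem_lt Hso Hy) Hx.
have HC'm' : forall y, y \in C' -> y < m'.
  move=> y Hy; apply/contraT => Hy'.
  by move: (chain_mem_lt Hso Hy); rewrite (UB y x (allP Hall y Hy) HxD Hy' Hx') ltxx.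
have H1 : wcong (x :: C' ++ [:: m']) (x :: m' :: C') by apply: wcong_bubble => //; exact: Hmax'.
apply: wcong_trans (wcong_pre [:: m] H1) _.
have Hsim1 : simP x m' by rewrite /simP Hx' Hmax'.
exact: wcong_suf C' (wcong_rel3 Hsim1 Hmm' (HDm x HxD)).
Qed.

(* Rearrangements of m m' (b' U_i)(b U_j) and m' m (b U_i)(b' U_j), for
   incomparable escapers b, b' with the same set U below them, into the common
   form m b m' b' U_i U_j. *)
Lemma cross_left (U : {set P}) (m m' b b' : P) (i j : nat) :
  simP b' b -> simP b m' -> b' < m' ->
  (forall y, y \in U -> y < b) -> (forall y, y \in U -> y < b') ->
  lcong (wprod [:: [:: m; m']] (wprod (wprod [:: [:: b']] (chains U i)) (wprod [:: [:: b]] (chains U j))))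
     (wprod [:: [:: m; b; m'; b']] (wprod (chains U i) (chains U j))).
Proof.
move=> H1 H2 H3 HU HU'.
have E1 : wprod [:: [:: m; m']] (wprod (wprod [:: [:: b']] (chains U i)) (wprod [:: [:: b]] (chains U j)))
  = wprod (wprod (wprod [:: [:: m; m'; b']] (chains U i)) [:: [:: b]]) (chains U j).
  by rewrite !wprodA -(wprodA [:: [:: m; m']] [:: [:: b']]) wprod11.
have E2 : wprod [:: [:: m; b; m'; b']] (wprod (chains U i) (chains U j))
  = wprod (map (fun C => [:: m; b; m'; b'] ++ C) (chains U i)) (chains U j).
  by rewrite -wprodA wprod1l.
rewrite E1 E2; apply: lcong_mulr.
rewrite wprod1l wprod1r -map_comp; apply: lcong_map => C HC /=.
have S1 : wcong (b' :: C ++ [:: b]) (b' :: b :: C).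
  apply: wcong_bubble; first exact: chains_below_top HU' HC.
    by move=> y Hy; apply: HU; apply: chains_mem HC Hy.
  by case/andP: H1.
apply: wcong_trans (wcong_pre [:: m; m'] S1) _.
exact: (wcong_ctx [:: m] C (wcong_rel3 H1 H2 H3)).
Qed.

Lemma cross_right (U : {set P}) (m m' b b' : P) (i j : nat) :
  simP b' b -> simP b m' -> simP m' m -> b < m ->
  (forall y, y \in U -> y < b) -> (forall y, y \in U -> y < b') ->
  lcong (wprod [:: [:: m'; m]] (wprod (wprod [:: [:: b]] (chains U i)) (wprod [:: [:: b']] (chains U j))))
     (wprod [:: [:: m; b; m'; b']] (wprod (chains U i) (chains U j))).
Proof.
move=> H1 H2 H3 H4 HU HU'.
have E1 : wprod [:: [:: m'; m]] (wprod (wprod [:: [:: b]] (chains U i)) (wprod [:: [:: b']] (chains U j)))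
  = wprod (wprod (wprod [:: [:: m'; m; b]] (chains U i)) [:: [:: b']]) (chains U j).
  by rewrite !wprodA -(wprodA [:: [:: m'; m]] [:: [:: b]]) wprod11.
have E2 : wprod [:: [:: m; b; m'; b']] (wprod (chains U i) (chains U j))
  = wprod (map (fun C => [:: m; b; m'; b'] ++ C) (chains U i)) (chains U j).
  by rewrite -wprodA wprod1l.
rewrite E1 E2; apply: lcong_mulr.
rewrite wprod1l wprod1r -map_comp; apply: lcong_map => C HC /=.
have S1 : wcong (b :: C ++ [:: b']) (b :: b' :: C).
  apply: wcong_bubble; first exact: chains_below_top HU HC.
    by move=> y Hy; apply: HU'; apply: chains_mem HC Hy.
  by case/andP: H1.
apply: wcong_trans (wcong_pre [:: m'; m] S1) _.
exact: (wcong_suf (b' :: C) (wcong_sym (wcong_rel3 H2 H3 H4))).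
Qed.

Lemma escape_commute (D A : {set P}) (m' : P) (i j : nat) :
  (forall y, y \in D -> (y \in A) = (y < m')) ->
  (forall y z, y \in D -> z \in D -> ~~ (y < m') -> ~~ (z < m') -> y = z) ->
  (forall b, b \in D -> chains_commute [set y in D | y < b]) ->
  lcong (wprod (escape D A i) (escape D A j)) (wprod (escape D A j) (escape D A i)).
Proof.
move=> HA UB IHU.
have [Hnil|[b HbD Hb]] := escape_cases HA.
  by rewrite !Hnil wprod_nil; exact: lcong_refl.
case: i => [|i]; first by rewrite escape0 wprod_nil wprod_nilr; exact: lcong_refl.
case: j => [|j]; first by rewrite escape0 wprod_nil wprod_nilr; exact: lcong_refl.
set U := [set y in D | y < b].
have HU : forall y, y \in U -> y < b by move=> y; rewrite inE => /andP [].
have Pi := escapeS i HA UB HbD Hb.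
have Pj := escapeS j HA UB HbD Hb.
apply: (lcong_perm (A := wprod (wprod [:: [:: b]] (chains U i)) (wprod [:: [:: b]] (chains U j)))
                (B := wprod (wprod [:: [:: b]] (chains U j)) (wprod [:: [:: b]] (chains U i)))).
- by rewrite perm_sym; apply: perm_wprod.
- by rewrite perm_sym; apply: perm_wprod.
apply: lcong_trans (top_square i j HU) _.
apply: lcong_trans (lcong_sym (top_square j i HU)).
apply: lcong_mull; exact: IHU.
Qed.

Lemma simP_sym (a b : P) : simP a b = simP b a.
Proof. by rewrite /simP andbC. Qed.

Lemma escape_cross (D D' A : {set P}) (m m' : P) (i j : nat) :
  (forall y, y \in D -> y < m) -> (forall y, y \in D' -> y < m') ->
  (forall y, y \in D -> (y \in A) = (y < m')) -> (forall y, y \in D' -> (y \in A) = (y < m)) ->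
  (forall y z, y \in D -> z \in D -> ~~ (y < m') -> ~~ (z < m') -> y = z) ->
  (forall y z, y \in D' -> z \in D' -> ~~ (y < m) -> ~~ (z < m) -> y = z) ->
  (forall y, y \in D -> ~~ (m' < y)) -> (forall y, y \in D' -> ~~ (m < y)) ->
  simP m m' ->
  (forall b, b \in D -> chains_commute [set y in D | y < b]) ->
  (forall b b', b \in D -> ~~ (b < m') -> b' \in D' -> ~~ (b' < m) ->
     [set y in D | y < b] = [set y in D' | y < b'] /\ simP b' b) ->
  lcong (wprod [:: [:: m; m']] (wprod (escape D' A i) (escape D A j)) ++ wprod [:: [:: m'; m]] (wprod (escape D A i) (escape D' A j)))
     (wprod [:: [:: m; m']] (wprod (escape D' A j) (escape D A i)) ++ wprod [:: [:: m'; m]] (wprod (escape D A j) (escape D' A i))).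
Proof.
move=> HDm HDm' HA HA' UB UB' Hmx' Hmx Hmm' IHU HU.
have [Hnil|[b HbD Hb]] := escape_cases HA.
  by rewrite !Hnil wprod_nil !wprod_nilr; exact: lcong_refl.
have [Hnil|[b' HbD' Hb']] := escape_cases HA'.
  by rewrite !Hnil wprod_nil !wprod_nilr; exact: lcong_refl.
case: i => [|i]; first by rewrite !escape0 wprod_nil !wprod_nilr; exact: lcong_refl.
case: j => [|j]; first by rewrite !escape0 wprod_nil !wprod_nilr; exact: lcong_refl.
have [HUU Hbb'] := HU b b' HbD Hb HbD' Hb'.
set U := [set y in D | y < b] in HUU *.
have HUb : forall y, y \in U -> y < b by move=> y; rewrite inE => /andP [].
have HUb' : forall y, y \in U -> y < b' by move=> y; rewrite HUU inE => /andP [].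
have Pi := escapeS i HA UB HbD Hb.
have Pj := escapeS j HA UB HbD Hb.
have P'i := escapeS i HA' UB' HbD' Hb'.
have P'j := escapeS j HA' UB' HbD' Hb'.
rewrite -HUU in P'i P'j.
have Hbm' : simP b m' by rewrite /simP Hb Hmx'.
have Hm'm : simP m' m by rewrite simP_sym.
have Hbm : b < m := HDm b HbD.
have Hb'm' : b' < m' := HDm' b' HbD'.
set b1 := [:: [:: b]]; set b1' := [:: [:: b']].
apply: (lcong_perm (A := wprod [:: [:: m; m']] (wprod (wprod b1' (chains U i)) (wprod b1 (chains U j)))
                   ++ wprod [:: [:: m'; m]] (wprod (wprod b1 (chains U i)) (wprod b1' (chains U j))))
                (B := wprod [:: [:: m; m']] (wprod (wprod b1' (chains U j)) (wprod b1 (chains U i)))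
                   ++ wprod [:: [:: m'; m]] (wprod (wprod b1 (chains U j)) (wprod b1' (chains U i))))).
- by apply: perm_cat; apply: perm_wprod => //; rewrite perm_sym; apply: perm_wprod.
- by apply: perm_cat; apply: perm_wprod => //; rewrite perm_sym; apply: perm_wprod.
have L_ij := cross_left m i j Hbb' Hbm' Hb'm' HUb HUb'.
have L_ji := cross_left m j i Hbb' Hbm' Hb'm' HUb HUb'.
have R_ij := cross_right i j Hbb' Hbm' Hm'm Hbm HUb HUb'.
have R_ji := cross_right j i Hbb' Hbm' Hm'm Hbm HUb HUb'.
apply: lcong_trans (lcong_cat L_ij R_ij) _.
apply: lcong_trans (lcong_sym (lcong_cat L_ji R_ji)).
have comm_U := lcong_mull [:: [:: m; b; m'; b']] (IHU b HbD i j).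
exact: (lcong_cat comm_U comm_U).
Qed.

Definition cross_commute (D D' : {set P}) (m m' : P) (i j : nat) :=
  lcong (wprod (wprod [:: [:: m]] (chains D i)) (wprod [:: [:: m']] (chains D' j))
      ++ wprod (wprod [:: [:: m']] (chains D' i)) (wprod [:: [:: m]] (chains D j)))
     (wprod (wprod [:: [:: m]] (chains D j)) (wprod [:: [:: m']] (chains D' i))
      ++ wprod (wprod [:: [:: m']] (chains D' j)) (wprod [:: [:: m]] (chains D i))).

End Escapes.

Ltac expand_escapes := repeat (rewrite -?wprodA ?(wprod_catl (chains _ _)) ?(wprod_catl (wprod _ _))
   ?(wprod_catl (escape _ _ _)) ?wprod1_cat
   ?(wprod_catr _ (chains _ _)) ?(wprod_catr _ (wprod _ _)) ?(wprod_catr _ (escape _ _ _))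
   ?(wsum_cat (chains _ _)) ?(wsum_cat (wprod _ _)) ?(wsum_cat (escape _ _ _)) /nc_add).

Section EscapesCommute.
Variables (d : Order.disp_t) (P : finPOrderType d).
Local Opaque wprod.

(* The cross terms commute: expand chains D = chains A ++ escape D A (and
   similarly for D') and combine [append_second_max], [escape_commute],
   [escape_cross] and the commutation over D and D'. *)
Lemma two_max_core (D D' A : {set P}) (m m' : P) (i j : nat) :
  A \subset D -> A \subset D' ->
  (forall y, y \in D -> y < m) -> (forall y, y \in D' -> y < m') ->
  (forall y, y \in D -> (y \in A) = (y < m')) -> (forall y, y \in D' -> (y \in A) = (y < m)) ->
  (forall y z, y \in D -> z \in D -> ~~ (y < m') -> ~~ (z < m') -> y = z) ->
  (forall y z, y \in D' -> z \in D' -> ~~ (y < m) -> ~~ (z < m) -> y = z) ->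
  (forall y, y \in D -> ~~ (m' < y)) -> (forall y, y \in D' -> ~~ (m < y)) ->
  simP m m' ->
  chains_commute D -> chains_commute D' ->
  (forall b, b \in D -> chains_commute [set y in D | y < b]) ->
  (forall b, b \in D' -> chains_commute [set y in D' | y < b]) ->
  (forall b b', b \in D -> ~~ (b < m') -> b' \in D' -> ~~ (b' < m) ->
     [set y in D | y < b] = [set y in D' | y < b'] /\ simP b' b) ->
  cross_commute D D' m m' i j.
Proof.
move=> HAD HAD' HDm HDm' HA HA' UB UB' Hmx' Hmx Hmm' IHD IHD' IHU IHU' HU.
have Hm'm : simP m' m by rewrite simP_sym.
have SD k : perm_eq (chains D k) (chains A k ++ escape D A k) by apply: chains_sub_split.
have SD' k : perm_eq (chains D' k) (chains A k ++ escape D' A k) by apply: chains_sub_split.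
have app_m k := append_second_max k HAD HDm HA UB Hmx' Hm'm.
have app_m' k := append_second_max k HAD' HDm' HA' UB' Hmx Hmm'.
have app_m_ij := lcong_mulr (chains A j ++ escape D' A j) (app_m i).
have app_m_ji := lcong_mulr (chains A i ++ escape D' A i) (app_m j).
have app_m'_ij := lcong_mulr (chains A j ++ escape D A j) (app_m' i).
have app_m'_ji := lcong_mulr (chains A i ++ escape D A i) (app_m' j).
have comm_D := lcong_mull [:: [:: m'; m]]
  (lcong_perm (perm_wprod (SD i) (SD j)) (perm_wprod (SD j) (SD i)) (IHD i j)).
have comm_D' := lcong_mull [:: [:: m; m']]
  (lcong_perm (perm_wprod (SD' i) (SD' j)) (perm_wprod (SD' j) (SD' i)) (IHD' i j)).
have esc_D := lcong_mull [:: [:: m'; m]] (escape_commute i j HA UB IHU).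
have esc_D' := lcong_mull [:: [:: m; m']] (escape_commute i j HA' UB' IHU').
have esc_cross := escape_cross i j HDm HDm' HA HA' UB UB' Hmx' Hmx Hmm' IHU HU.
apply: (Iplac_eq _ (Ip_add app_m_ij (Ip_add (Ip_opp app_m_ji) (Ip_add app_m'_ij (Ip_add (Ip_opp app_m'_ji)
  (Ip_add comm_D' (Ip_add (Ip_opp esc_D') (Ip_add comm_D (Ip_add (Ip_opp esc_D) esc_cross))))))))) => w.
rewrite /nc_sub /nc_add /nc_opp.
rewrite !(wsum_cat (wprod _ _)) /nc_add.
rewrite (wsum_wprod_perm (perm_wprod (perm_refl _) (SD i)) (perm_wprod (perm_refl _) (SD' j))).
rewrite (wsum_wprod_perm (perm_wprod (perm_refl _) (SD' i)) (perm_wprod (perm_refl _) (SD j))).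
rewrite (wsum_wprod_perm (perm_wprod (perm_refl _) (SD j)) (perm_wprod (perm_refl _) (SD' i))).
rewrite (wsum_wprod_perm (perm_wprod (perm_refl _) (SD' j)) (perm_wprod (perm_refl _) (SD i))).
expand_escapes.
ring.
Qed.

End EscapesCommute.

Section WidthTwo.
Variables (d : Order.disp_t) (P : finPOrderType d).

Lemma incomparable_of (a b : P) : ~~ (a < b) -> ~~ (b < a) -> a != b -> ~~ (a >=< b).
Proof.
move=> H1 H2 H3; rewrite /Order.comparable !le_eqVlt (negbTE H1) (negbTE H2).
by rewrite (negbTE H3) eq_sym (negbTE H3).
Qed.

Lemma free31_contra (x y z w : P) : free31 P -> x < y -> y < z ->
  ~~ (w >=< x) -> ~~ (w >=< y) -> ~~ (w >=< z) -> False.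
Proof. by move=> H Hxy Hyz H1 H2 H3; apply: (H x y z w Hxy Hyz); split. Qed.

Lemma unique_escaper (S : {set P}) (m m' : P) :
  free31 P ->
  m \in S -> m' \in S -> m != m' ->
  (forall y, y \in S -> ~~ (m < y)) -> (forall y, y \in S -> ~~ (m' < y)) ->
  (forall x y z, x \in S -> y \in S -> z \in S ->
     ~~ (x >=< y) -> ~~ (y >=< z) -> ~~ (x >=< z) -> False) ->
  forall y z, y \in [set y in S | y < m] -> z \in [set y in S | y < m] ->
    ~~ (y < m') -> ~~ (z < m') -> y = z.
Proof.
move=> H31 Hm Hm' Hmm' Hmax Hmax' Hw y z.
rewrite !inE => /andP [HyS Hym] /andP [HzS Hzm] Hy Hz.
have Hsim : forall u, u \in S -> u < m -> ~~ (u < m') -> ~~ (m' >=< u).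
  move=> u HuS Hum Hu; apply: incomparable_of; [exact: Hmax'|exact: Hu|].
  by apply/eqP => E; move: Hum; rewrite -E => Hm'm; move: (Hmax' m Hm); rewrite Hm'm.
have Hmm : ~~ (m' >=< m).
  apply: incomparable_of; [exact: Hmax'|exact: Hmax|by rewrite eq_sym].
case: (eqVneq y z) => // Hyz; exfalso.
case: (boolP (y >=< z)) => Hc; last first.
  apply: (Hw y z m' HyS HzS Hm' Hc); last by rewrite comparable_sym Hsim.
  by rewrite comparable_sym Hsim.
move: Hc; rewrite /Order.comparable !le_eqVlt (negbTE Hyz) eq_sym (negbTE Hyz) /=.
case/orP => Hlt.
  exact: (free31_contra H31 Hlt Hzm (Hsim y HyS Hym Hy) (Hsim z HzS Hzm Hz) Hmm).
exact: (free31_contra H31 Hlt Hym (Hsim z HzS Hzm Hz) (Hsim y HyS Hym Hy) Hmm).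
Qed.

Lemma escapers_same_below (S : {set P}) (m m' b b' : P) :
  free31 P -> m' \in S -> (forall y, y \in S -> ~~ (m < y)) ->
  b \in [set y in S | y < m] -> ~~ (b < m') ->
  b' \in [set y in S | y < m'] -> ~~ (b' < m) ->
  forall y, y \in S -> y < b -> y < b'.
Proof.
move=> H31 Hm' Hmax.
rewrite !inE => /andP [HbS Hbm] Hb /andP [Hb'S Hb'm'] Hb' y HyS Hyb.
apply/contraT => Hyb'.
have Hbb1 : ~~ (b < b') by apply/negP => H; move/negP: Hb; apply; exact: lt_trans H Hb'm'.
have Hbb2 : ~~ (b' < b) by apply/negP => H; move/negP: Hb'; apply; exact: lt_trans H Hbm.
have Hbb : b' != b by apply/eqP => E; move: Hb'm'; rewrite E => H; move/negP: Hb; apply.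
have Hy1 : ~~ (b' < y) by apply/negP => H; move/negP: Hbb2; apply; exact: lt_trans H Hyb.
have Hy2 : b' != y by apply/eqP => E; move/negP: Hbb2; apply; rewrite E.
have Hm1 : b' != m by apply/eqP => E; move: (Hmax m' Hm'); rewrite -E Hb'm'.
exfalso; apply: (@free31_contra y b m b' H31 Hyb Hbm).
- by apply: incomparable_of.
- by apply: incomparable_of.
- by apply: incomparable_of => //; apply: Hmax.
Qed.

Lemma escapers_below (S : {set P}) (m m' b b' : P) :
  free31 P -> m \in S -> m' \in S ->
  (forall y, y \in S -> ~~ (m < y)) -> (forall y, y \in S -> ~~ (m' < y)) ->
  b \in [set y in S | y < m] -> ~~ (b < m') ->
  b' \in [set y in S | y < m'] -> ~~ (b' < m) ->
  [set y in [set y in S | y < m] | y < b] = [set y in [set y in S | y < m'] | y < b']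
  /\ simP b' b.
Proof.
move=> H31 Hm Hm' Hmax Hmax' Hb Hbn Hb' Hb'n.
have U1 := escapers_same_below H31 Hm' Hmax Hb Hbn Hb' Hb'n.
have U2 := escapers_same_below H31 Hm Hmax' Hb' Hb'n Hb Hbn.
move: (Hb) (Hb'); rewrite !inE => /andP [HbS Hbm] /andP [Hb'S Hb'm'].
split.
  apply/setP => y; rewrite !inE; apply/idP/idP.
    case/andP=> /andP [HyS Hym] Hyb; have Hyb' := U1 y HyS Hyb.
    by rewrite HyS Hyb' (lt_trans Hyb' Hb'm').
  case/andP=> /andP [HyS Hym] Hyb'; have Hyb := U2 y HyS Hyb'.
  by rewrite HyS Hyb (lt_trans Hyb Hbm).
rewrite /simP; apply/andP; split.
  by apply/negP => H; move/negP: Hb'n; apply; exact: lt_trans H Hbm.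
by apply/negP => H; move/negP: Hbn; apply; exact: lt_trans H Hb'm'.
Qed.

Lemma proper_of_missing (S X : {set P}) (m : P) : X \subset S -> m \in S -> m \notin X -> X \proper S.
Proof. by move=> H1 H2 H3; apply/properP; split => //; exists m. Qed.

End WidthTwo.

Section TwoMaxima.
Variables (d : Order.disp_t) (P : finPOrderType d).
Local Opaque wprod.

(* Splitting the chains of S by a leading maximal element m or m', the
   commutator for S is a combination of those for S \ m, S \ m', S \ m \ m'
   and of the cross terms. *)
Lemma chains_commute_two_max_split (S : {set P}) (m m' : P) :
  m \in S -> m' \in S -> m != m' ->
  (forall y, y \in S -> ~~ (m < y)) -> (forall y, y \in S -> ~~ (m' < y)) ->
  chains_commute (S :\ m) -> chains_commute (S :\ m') -> chains_commute (S :\ m :\ m') ->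
  (forall i j, cross_commute [set y in S | y < m] [set y in S | y < m'] m m' i j) ->
  chains_commute S.
Proof.
move=> Hm Hm' Hmm' Hmax Hmax' ISm ISm' IT HW k l.
set D := [set y in S | y < m].
set D' := [set y in S | y < m'].
have Hm'Sm : m' \in S :\ m by rewrite !inE eq_sym Hmm'.
have HmSm' : m \in S :\ m' by rewrite !inE Hmm'.
case: k => [|k']; first by rewrite chains0 wprod_unitl wprod_unitr; exact: lcong_refl.
case: l => [|l']; first by rewrite chains0 wprod_unitl wprod_unitr; exact: lcong_refl.
set T := S :\ m :\ m'.
have HS j : perm_eq (chains S j.+1) (chains (S :\ m) j.+1 ++ wprod [:: [:: m]] (chains D j)).
  by rewrite wprod1; apply: chains_split_max.
have HSm j : perm_eq (chains (S :\ m) j.+1) (chains T j.+1 ++ wprod [:: [:: m']] (chains D' j)).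
  rewrite wprod1.
  have -> : D' = [set y in S :\ m | y < m'].
    apply/setP => y; rewrite !inE.
    by case: (eqVneq y m) => [->|_] //=; rewrite (negbTE (Hmax m' Hm')) andbF.
  apply: chains_split_max => // y; rewrite inE => /andP [_ Hy]; exact: Hmax'.
have HT : S :\ m' :\ m = T by apply/setP => y; rewrite !inE andbCA.
have HSm' j : perm_eq (chains (S :\ m') j.+1) (chains T j.+1 ++ wprod [:: [:: m]] (chains D j)).
  rewrite wprod1 -HT.
  have -> : D = [set y in S :\ m' | y < m].
    apply/setP => y; rewrite !inE.
    by case: (eqVneq y m') => [->|_] //=; rewrite (negbTE (Hmax' m Hm)) andbF.
  apply: chains_split_max => // y; rewrite inE => /andP [_ Hy]; exact: Hmax.
have HSS j : perm_eq (chains S j.+1)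
    (chains T j.+1 ++ wprod [:: [:: m']] (chains D' j) ++ wprod [:: [:: m]] (chains D j)).
  by apply: perm_trans (HS j) _; rewrite catA perm_cat2r.
have HWkl := HW k' l'.
apply: (Iplac_eq _ (Ip_add (ISm k'.+1 l'.+1) (Ip_add (ISm' k'.+1 l'.+1)
   (Ip_add (Ip_opp (IT k'.+1 l'.+1)) HWkl)))) => w.
rewrite /nc_sub /nc_add /nc_opp.
rewrite (wsum_wprod_perm (HSS k') (HSS l')) (wsum_wprod_perm (HSS l') (HSS k')).
rewrite (wsum_wprod_perm (HSm k') (HSm l')) (wsum_wprod_perm (HSm l') (HSm k')).
rewrite (wsum_wprod_perm (HSm' k') (HSm' l')) (wsum_wprod_perm (HSm' l') (HSm' k')).
expand_products.
ring.
Qed.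

Lemma chains_commute_two_max (S : {set P}) (m m' : P) :
  free31 P ->
  m \in S -> m' \in S -> m != m' ->
  (forall y, y \in S -> ~~ (m < y)) -> (forall y, y \in S -> ~~ (m' < y)) ->
  (forall x y z, x \in S -> y \in S -> z \in S ->
     ~~ (x >=< y) -> ~~ (y >=< z) -> ~~ (x >=< z) -> False) ->
  (forall X : {set P}, X \proper S -> chains_commute X) ->
  chains_commute S.
Proof.
move=> H31 Hm Hm' Hmm' Hmax Hmax' Hw IH.
apply: (chains_commute_two_max_split Hm Hm' Hmm' Hmax Hmax').
- by apply: IH; apply: properD1.
- by apply: IH; apply: properD1.
- apply: IH; apply: (proper_of_missing _ Hm); last by rewrite !inE eqxx andbF.
  by apply/subsetP => y; rewrite !inE => /and3P [].
move=> i j.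
set D := [set y in S | y < m].
set D' := [set y in S | y < m'].
set A := [set y in S | (y < m) && (y < m')].
have HAD : A \subset D by apply/subsetP => y; rewrite !inE => /and3P [-> -> _].
have HAD' : A \subset D' by apply/subsetP => y; rewrite !inE => /and3P [-> _ ->].
have HDm : forall y, y \in D -> y < m by move=> y; rewrite inE => /andP [].
have HDm' : forall y, y \in D' -> y < m' by move=> y; rewrite inE => /andP [].
have HA : forall y, y \in D -> (y \in A) = (y < m') by move=> y; rewrite !inE => /andP [-> ->].
have HA' : forall y, y \in D' -> (y \in A) = (y < m) by move=> y; rewrite !inE => /andP [-> ->]; rewrite andbT.
have UB := unique_escaper H31 Hm Hm' Hmm' Hmax Hmax' Hw.
have Hm'm : m' != m by rewrite eq_sym.
have UB' := unique_escaper H31 Hm' Hm Hm'm Hmax' Hmax Hw.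
have Hmx' : forall y, y \in D -> ~~ (m' < y) by move=> y; rewrite inE => /andP [Hy _]; apply: Hmax'.
have Hmx : forall y, y \in D' -> ~~ (m < y) by move=> y; rewrite inE => /andP [Hy _]; apply: Hmax.
have Hsim : simP m m' by rewrite /simP Hmax // Hmax'.
have HmD : m \notin D by rewrite inE ltxx andbF.
have HmD' : m' \notin D' by rewrite inE ltxx andbF.
have HDS : D \subset S by apply/subsetP => y; rewrite inE => /andP [].
have HDS' : D' \subset S by apply/subsetP => y; rewrite inE => /andP [].
have IHD : chains_commute D by apply: IH; exact: proper_of_missing HDS Hm HmD.
have IHD' : chains_commute D' by apply: IH; exact: proper_of_missing HDS' Hm' HmD'.
have IHU : forall b, b \in D -> chains_commute [set y in D | y < b].
  move=> b Hb; apply: IH; apply: (proper_of_missing _ Hm); last by rewrite !inE ltxx andbF.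
  by apply/subsetP => y; rewrite !inE => /andP [/andP [] ].
have IHU' : forall b, b \in D' -> chains_commute [set y in D' | y < b].
  move=> b Hb; apply: IH; apply: (proper_of_missing _ Hm'); last by rewrite !inE ltxx andbF.
  by apply/subsetP => y; rewrite !inE => /andP [/andP [] ].
have HU b b' := @escapers_below _ _ S m m' b b' H31 Hm Hm' Hmax Hmax'.
exact: two_max_core HAD HAD' HDm HDm' HA HA' UB UB' Hmx' Hmx Hsim IHD IHD' IHU IHU' HU.
Qed.

End TwoMaxima.

Lemma set_strong_ind (T : finType) (Q : {set T} -> Prop) :
  (forall S : {set T}, (forall X : {set T}, X \proper S -> Q X) -> Q S) ->
  forall S, Q S.
Proof.
move=> IH S; have [n] := ubnP #|S|; elim: n S => // n IHn S HS.
apply: IH => X HX; apply: IHn; exact: leq_trans (proper_card HX) HS.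
Qed.

Section Induction.
Variables (d : Order.disp_t) (P : finPOrderType d).

Lemma exists_maximal (S : {set P}) (x : P) : x \in S ->
  exists m, [/\ m \in S, x <= m & forall y, y \in S -> ~~ (m < y)].
Proof.
move=> Hx0.
suff H : forall (n : nat) (x : P), x \in S -> leq #|[set z in S | x < z]| n ->
  exists m, [/\ m \in S, x <= m & forall y, y \in S -> ~~ (m < y)].
  exact: (H _ x Hx0 (leqnn _)).
clear Hx0; elim=> [|n IHn] {}x Hx Hc.
  exists x; split => // y Hy.
  apply/negP => Hxy; move: Hc; rewrite leqn0 cards_eq0 => /eqP E.
  have : y \in [set z in S | x < z] by rewrite inE Hy Hxy.
  by rewrite E inE.
case: (boolP [exists y in S, x < y]) => [/existsP [y /andP [Hy Hxy]]|Hno].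
  have Hp : [set z in S | y < z] \proper [set z in S | x < z].
    apply/properP; split.
      by apply/subsetP => z; rewrite !inE => /andP [-> Hz]; exact: lt_trans Hxy Hz.
    by exists y; rewrite !inE ?Hy ?Hxy ?ltxx.
  have Hc' : leq #|[set z in S | y < z]| n.
    by rewrite -ltnS; apply: leq_trans (proper_card Hp) Hc.
  have [m [Hm Hym Hmax]] := IHn y Hy Hc'.
  by exists m; split => //; apply: le_trans (ltW Hxy) Hym.
exists x; split => // y Hy.
by apply/negP => Hxy; move/negP: Hno; apply; apply/existsP; exists y; rewrite Hy.
Qed.

Lemma top_or_second_max (S : {set P}) (m : P) :
  (forall y, y \in S -> y != m -> y < m) \/
  exists m', [/\ m' \in S, m != m' & forall y, y \in S -> ~~ (m' < y)].
Proof.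
case: (boolP [forall y in S, (y != m) ==> (y < m)]) => [Hall|Hnall].
  by left=> y Hy Hym; move/forall_inP: Hall => /(_ y Hy); rewrite Hym.
right; have [y Hy] := forall_inPn Hnall; rewrite negb_imply => /andP [Hym Hyn].
have [m' [Hm' Hym' Hmax']] := exists_maximal Hy.
exists m'; split => //; apply/eqP => E; move: Hym'.
by rewrite -E le_eqVlt (negbTE Hym) (negbTE Hyn).
Qed.

Lemma antichain3_cases (S : {set P}) :
  (exists x y z, [/\ x \in S, y \in S, z \in S &
                    [&& ~~ (x >=< y), ~~ (y >=< z) & ~~ (x >=< z)]])
  \/ (forall x y z, x \in S -> y \in S -> z \in S ->
        ~~ (x >=< y) -> ~~ (y >=< z) -> ~~ (x >=< z) -> False).
Proof.
case: (boolP [exists x in S, exists y in S, exists z in S,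
                [&& ~~ (x >=< y), ~~ (y >=< z) & ~~ (x >=< z)]]).
  by case/exists_inP=> x Hx /exists_inP [y Hy /exists_inP [z Hz H]]; left; exists x, y, z.
move=> Hno; right=> x y z Hx Hy Hz H1 H2 H3; case/negP: Hno.
apply/exists_inP; exists x => //; apply/exists_inP; exists y => //.
by apply/exists_inP; exists z => //; rewrite H1 H2 H3.
Qed.

Lemma elem_comm_chains (S : {set P}) (k l : nat) :
  nc_eq (elem_comm S k%:Z l%:Z)
      (nc_sub (wsum (wprod (chains S k) (chains S l))) (wsum (wprod (chains S l) (chains S k)))).
Proof.
move=> w; rewrite /elem_comm /nc_sub /nc_add /nc_opp !wsum_wprod.
by rewrite !(nc_mul_eql _ (elemP_chains _ _)) !(nc_mul_eqr _ (elemP_chains _ _)).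
Qed.

Lemma chains_commute_antichain3 (S : {set P}) x y z :
  ~~ (x >=< y) -> ~~ (y >=< z) -> ~~ (x >=< z) ->
  chains_commute (S :\ x) -> chains_commute (S :\ y) -> chains_commute (S :\ z) ->
  chains_commute S.
Proof.
move=> Hxy Hyz Hxz IHx IHy IHz k l.
apply: Iplac_eq (elem_comm_chains S k l) _.
apply: (commute_antichain3 Hxy Hyz Hxz).
- by apply: Iplac_eq (IHx k l) => w; rewrite elem_comm_chains.
- by apply: Iplac_eq (IHy k l) => w; rewrite elem_comm_chains.
- by apply: Iplac_eq (IHz k l) => w; rewrite elem_comm_chains.
Qed.

Lemma chains_commute0 : chains_commute (set0 : {set P}).
Proof.
move=> [|k] l; first by rewrite chains0 wprod_unitl wprod_unitr; exact: lcong_refl.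
by rewrite chains_set0 wprod_nil wprod_nilr; exact: lcong_refl.
Qed.

Theorem chains_commute_free31 (S : {set P}) : free31 P -> chains_commute S.
Proof.
move=> H31; elim/set_strong_ind: S => S IH.
have [[x [y [z [Hx Hy Hz /and3P [Hxy Hyz Hxz]]]]] | Hw] := antichain3_cases S.
  by apply: (chains_commute_antichain3 Hxy Hyz Hxz); apply: IH; apply: properD1.
have [-> | [x Hx]] := set_0Vmem S; first exact: chains_commute0.
have [m [Hm _ Hmax]] := exists_maximal Hx.
have [Htop | [m' [Hm' Hmm' Hmax']]] := top_or_second_max S m.
  by apply: (chains_commute_top Hm Htop); apply: IH; apply: properD1.
exact: (chains_commute_two_max H31 Hm Hm' Hmm' Hmax Hmax' Hw IH).
Qed.

Lemma elem_comm_negl (X : {set P}) (n : nat) (l : int) : in_Iplac (elem_comm X (Negz n) l).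
Proof.
apply: Iplac_zeroE => w; rewrite /elem_comm /nc_sub /nc_add /nc_opp.
rewrite (nc_mul_eql _ (elemP_neg _ _)) (nc_mul_eqr _ (elemP_neg _ _)).
by rewrite nc_mul0l nc_mul0r /nc_zero subrr.
Qed.

Lemma elem_comm_swap (X : {set P}) (k l : int) :
  in_Iplac (elem_comm X k l) -> in_Iplac (elem_comm X l k).
Proof. by move=> H; apply: Iplac_oppE H _ => w; rewrite /elem_comm /nc_sub /nc_add /nc_opp opprB. Qed.

End Induction.

Theorem mainTheorem1 (d : Order.disp_t) (P : finPOrderType d) :
  free31 P ->
  forall (k l : int) (S : {set P}),
    in_Iplac (nc_sub (nc_mul (elemP k S) (elemP l S))
                     (nc_mul (elemP l S) (elemP k S))).
Proof.
move=> H31 k l S; change (in_Iplac (elem_comm S k l)).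
case: k => [k|k]; last exact: elem_comm_negl.
case: l => [l|l]; last by apply: elem_comm_swap; exact: elem_comm_negl.
apply: Iplac_eq (chains_commute_free31 S H31 k l) => w.
by rewrite elem_comm_chains.
Qed.
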